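(* Let $d,T\ge 1$, let $0<b<c$, and let $x_1,\dots,x_T\in\mathbb{R}^d$ and $y_1,\dots,y_T\in\mathbb{R}$ be arbitrary. Assume the labels are bounded: $\sup_t |y_t|\le Y$ for some $Y\in\mathbb{R}$. Let $\hat y_1,\dots,\hat y_T$ be the predictions of the LASER algorithm (defined in the context). Then \[ \sum_{t=1}^T (y_t-\hat y_t)^2 \;\le\; \min_{u_1,\dots,u_T\in\mathbb{R}^d}\Big[\, b\|u_1\|^2 + c\sum_{t=1}^{T-1}\|u_t-u_{t+1}\|^2 + \sum_{t=1}^T (x_t^\top u_t - y_t)^2 \Big] \;+\; Y^2\sum_{t=1}^T x_t^\top D_t^{-1}x_t . \]
   Context: LASER algorithm: with parameters $0<b<c$, set $D_0=\frac{bc}{c-b}I\in\mathbb{R}^{d\times d}$ and $e_0=0\in\mathbb{R}^d$. For $t=1,\dots,T$: after receiving $x_t$, compute $D_t=\big(D_{t-1}^{-1}+c^{-1}I\big)^{-1}+x_tx_t^\top$; output the prediction $\hat y_t = x_t^\top D_t^{-1}\big(I+c^{-1}D_{t-1}\big)^{-1}e_{t-1}$; after receiving $y_t$, set $e_t=\big(I+c^{-1}D_{t-1}\big)^{-1}e_{t-1}+y_tx_t$. Here $I$ is the $d\times d$ identity and $\|\cdot\|$ the Euclidean norm. *)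

From HB Require Import structures.
From mathcomp Require Import all_boot all_order all_algebra.
Set Implicit Arguments. Unset Strict Implicit. Unset Printing Implicit Defensive.
Import Order.TTheory GRing.Theory Num.Theory.
Local Open Scope ring_scope.

Section Laser.
Variables (R : realFieldType) (d : nat) (b c : R).
Variables (x : nat -> 'cV[R]_d) (y : nat -> R).
(* Time is indexed 1..T; index 0 holds the initial values D_0, e_0. *)

Fixpoint laserD (t : nat) : 'M[R]_d :=
  match t with
  | 0 => (b * c / (c - b))%:M
  | t'.+1 => invmx (invmx (laserD t') + c^-1%:M) + x t'.+1 *m (x t'.+1)^T
  end.

Fixpoint laserE (t : nat) : 'cV[R]_d :=
  match t with
  | 0 => 0
  | t'.+1 => invmx (1%:M + c^-1 *: laserD t') *m laserE t' + y t'.+1 *: x t'.+1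
  end.

Definition laser_pred (t : nat) : R :=
  ((x t)^T *m invmx (laserD t) *m invmx (1%:M + c^-1 *: laserD t.-1)
      *m laserE t.-1) 0 0.
End Laser.

Definition sqnorm (R : realFieldType) (d : nat) (u : 'cV[R]_d) : R := (u^T *m u) 0 0.
Definition vdot (R : realFieldType) (d : nat) (u v : 'cV[R]_d) : R := (u^T *m v) 0 0.

From HB Require Import structures.
From mathcomp Require Import all_boot all_order all_algebra.
From mathcomp Require Import ring lra.
Import Order.TTheory GRing.Theory Num.Theory.
Local Open Scope ring_scope.
Set Implicit Arguments. Unset Strict Implicit. Unset Printing Implicit Defensive.

(* LASER is forward dynamic programming on the comparator loss. For the
   quadratic L_t(u) = u'D_t u - 2 e_t'u + r_t, the recursions for D_t and e_t say
   exactly that L_{t+1}(u) = min_u' (L_t(u') + c|u' - u|^2) + (x_{t+1}'u - y_{t+1})^2,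
   and D_0 is chosen so that the first minimum is b|u|^2; hence L_T(u_T) is at most
   the regularised loss of the comparator. The prediction is x_{t+1}'w for an
   explicit w, and evaluating L_{t+1} at w yields
     (y_{t+1} - hat y_{t+1})^2 <= min L_{t+1} - min L_t + y_{t+1}^2 x_{t+1}'D_{t+1}^-1 x_{t+1},
   which telescopes from min L_0 = 0 to min L_T <= L_T(u_T). *)

Section InverseIdentities.
Variables (F : fieldType) (d : nat) (c : F) (A : 'M[F]_d).
Hypotheses (c_neq0 : c != 0) (A_unit : A \in unitmx) (Ac_unit : A + c%:M \in unitmx).

Lemma invmx_eq (B X : 'M[F]_d) : B *m X = 1%:M -> invmx B = X.
Proof.
move=> BX; have [B_unit _] := mulmx1_unit BX.
by rewrite -[invmx B]mulmx1 -BX mulmxA mulVmx // mul1mx.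
Qed.

Lemma invmx_invD_scalar :
  invmx (invmx A + c^-1%:M) = c%:M - (c * c) *: invmx (A + c%:M).
Proof.
set Mi := invmx (A + c%:M); set iA := invmx A.
(* resolvent identity *)
have iA_split : iA = Mi + c *: (iA *m Mi).
  rewrite -{1}[iA]mulmx1 -(mulmxV Ac_unit) mulmxA mulmxDr mulVmx //.
  by rewrite mul_mx_scalar mulmxDl mul1mx -scalemxAl.
apply: invmx_eq.
rewrite mulmxDl !mulmxBr mul_mx_scalar -!scalemxAr mul_scalar_mx scale_scalar_mx.
rewrite mul_scalar_mx {1}iA_split.
by apply/matrixP => i j; rewrite !mxE; case: (i == j) => /=; field.
Qed.

Lemma invmx_1D_scale : invmx (1%:M + c^-1 *: A) = c *: invmx (A + c%:M).
Proof.
apply: invmx_eq.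
have -> : 1%:M + c^-1 *: A = c^-1 *: (A + c%:M).
  by apply/matrixP => i j; rewrite !mxE; case: (i == j) => /=; field.
by rewrite -scalemxAl -scalemxAr scalerA mulVf // scale1r mulmxV.
Qed.

End InverseIdentities.

Section QuadraticForms.
Variables (R : realFieldType) (d : nat).
Implicit Types (u v z : 'cV[R]_d) (A B : 'M[R]_d).

Lemma vdotC u v : vdot u v = vdot v u.
Proof. by rewrite /vdot -{1}[u^T *m v]trmxK trmx_mul trmxK mxE. Qed.

Lemma vdotDl u1 u2 v : vdot (u1 + u2) v = vdot u1 v + vdot u2 v.
Proof. by rewrite /vdot linearD mulmxDl mxE. Qed.

Lemma vdotZl a u v : vdot (a *: u) v = a * vdot u v.
Proof. by rewrite /vdot linearZ -scalemxAl mxE. Qed.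

Lemma vdotDr u v1 v2 : vdot u (v1 + v2) = vdot u v1 + vdot u v2.
Proof. by rewrite vdotC vdotDl !(vdotC _ u). Qed.

Lemma vdotZr a u v : vdot u (a *: v) = a * vdot u v.
Proof. by rewrite vdotC vdotZl vdotC. Qed.

Lemma vdotNl u v : vdot (- u) v = - vdot u v.
Proof. by rewrite -scaleN1r vdotZl mulN1r. Qed.

Lemma vdotNr u v : vdot u (- v) = - vdot u v.
Proof. by rewrite -scaleN1r vdotZr mulN1r. Qed.

Lemma vdotBl u1 u2 v : vdot (u1 - u2) v = vdot u1 v - vdot u2 v.
Proof. by rewrite vdotDl vdotNl. Qed.

Lemma vdotBr u v1 v2 : vdot u (v1 - v2) = vdot u v1 - vdot u v2.
Proof. by rewrite vdotDr vdotNr. Qed.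

Lemma vdot0l v : vdot 0 v = 0.
Proof. by rewrite -(scale0r 0) vdotZl mul0r. Qed.

Lemma vdot_mulmxr u A v : vdot u (A *m v) = vdot (A^T *m u) v.
Proof. by rewrite /vdot trmx_mul trmxK mulmxA. Qed.

Lemma vdot_outer u (x : 'cV[R]_d) v :
  vdot u ((x *m x^T) *m v) = vdot u x * vdot x v.
Proof. by rewrite /vdot !mulmxA -(mulmxA (u^T *m x)) [in LHS]mxE big_ord1. Qed.

Lemma vdot_scalar_mx u (a : R) v : vdot u (a%:M *m v) = a * vdot u v.
Proof. by rewrite mul_scalar_mx vdotZr. Qed.

Lemma sqnorm_ge0 z : 0 <= sqnorm z.
Proof. by rewrite /sqnorm mxE sumr_ge0 // => i _; rewrite mxE -expr2 sqr_ge0. Qed.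

Lemma sqnorm_gt0 z : z != 0 -> 0 < sqnorm z.
Proof.
move=> z_neq0; rewrite lt_def sqnorm_ge0 andbT; apply: contra z_neq0.
rewrite /sqnorm mxE psumr_eq0 => [/allP z0|i _]; last first.
  by rewrite mxE -expr2 sqr_ge0.
apply/eqP/matrixP => i j; rewrite (ord1 j) mxE.
move/eqP: (z0 i (mem_index_enum _)); rewrite !mxE => /eqP.
by rewrite mulf_eq0 orbb => /eqP.
Qed.

Definition posdef A := A^T = A /\ forall z, z != 0 -> 0 < vdot z (A *m z).
Definition posemidef A := A^T = A /\ forall z, 0 <= vdot z (A *m z).

Lemma posdef_form_ge0 A z : posdef A -> 0 <= vdot z (A *m z).
Proof.
case=> _ A_pos; have [->|z_neq0] := eqVneq z 0; first by rewrite vdot0l.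
exact/ltW/A_pos.
Qed.

Lemma posdef_unit A : posdef A -> A \in unitmx.
Proof.
move=> [A_sym A_pos]; rewrite -row_free_unit -kermx_eq0.
apply/negPn/negP => /rowV0Pn [v /sub_kermxP vA0 v_neq0].
have vT_neq0 : v^T != 0.
  by apply: contra v_neq0 => /eqP vT0; rewrite -[v]trmxK vT0 linear0.
by have := A_pos _ vT_neq0; rewrite -A_sym -trmx_mul vA0 linear0 vdotC vdot0l ltxx.
Qed.

Lemma posdef_inv A : posdef A -> posdef (invmx A).
Proof.
move=> A_pd; have A_unit := posdef_unit A_pd; case: A_pd => A_sym A_pos.
split; first by rewrite trmx_inv A_sym.
move=> z z_neq0; set w := invmx A *m z.
have zE : z = A *m w by rewrite /w mulKVmx.
have w_neq0 : w != 0 by apply: contra z_neq0 => /eqP w0; rewrite zE w0 mulmx0.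
by rewrite {1}zE vdotC; exact: A_pos.
Qed.

Lemma posdefD A B : posdef A -> posemidef B -> posdef (A + B).
Proof.
move=> [A_sym A_pos] [B_sym B_pos]; split; first by rewrite linearD /= A_sym B_sym.
by move=> z z_neq0; rewrite mulmxDl vdotDr (ltr_wpDr (B_pos z) (A_pos z z_neq0)).
Qed.

Lemma posdef_scalar_mx (a : R) : 0 < a -> posdef a%:M.
Proof.
move=> a_gt0; split; first by rewrite tr_scalar_mx.
by move=> z z_neq0; rewrite vdot_scalar_mx mulr_gt0 // sqnorm_gt0.
Qed.

Lemma posemidef_scalar_mx (a : R) : 0 <= a -> posemidef a%:M.
Proof.
move=> a_ge0; split; first by rewrite tr_scalar_mx.
by move=> z; rewrite vdot_scalar_mx mulr_ge0 // sqnorm_ge0.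
Qed.

Lemma posemidef_outer (x : 'cV[R]_d) : posemidef (x *m x^T).
Proof.
split; first by rewrite trmx_mul trmxK.
by move=> z; rewrite vdot_outer vdotC -expr2 sqr_ge0.
Qed.

Lemma vdot_complete_square A u v : posdef A ->
  vdot u (A *m u) - 2 * vdot v u
  = - vdot v (invmx A *m v) + vdot (u - invmx A *m v) (A *m (u - invmx A *m v)).
Proof.
move=> A_pd; have A_unit := posdef_unit A_pd; have [A_sym _] := A_pd.
rewrite mulmxBr mulKVmx // !(vdotBl, vdotBr).
rewrite (vdot_mulmxr (invmx A *m v)) A_sym mulKVmx // (vdotC u v).
by rewrite (vdotC (invmx A *m v) v); ring.
Qed.

End QuadraticForms.

Section Laser.
Variables (R : realFieldType) (d : nat) (b c : R).
Variables (x : nat -> 'cV[R]_d) (y : nat -> R).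
Hypotheses (b_gt0 : 0 < b) (b_lt_c : b < c).

Local Notation D := (laserD b c x).
Local Notation E := (laserE b c x y).

Let c_gt0 : 0 < c. Proof. exact: lt_trans b_lt_c. Qed.

Lemma laserD_posdef t : posdef (D t).
Proof.
elim: t => [|t IH] /=.
  by apply: posdef_scalar_mx; rewrite divr_gt0 ?mulr_gt0 ?subr_gt0.
apply: posdefD (posemidef_outer _); apply/posdef_inv/posdefD; first exact: posdef_inv.
by apply: posemidef_scalar_mx; rewrite invr_ge0 ltW.
Qed.

Lemma laserDc_posdef t : posdef (D t + c%:M).
Proof. by apply: posdefD (laserD_posdef t) _; apply: posemidef_scalar_mx; rewrite ltW. Qed.

Lemma laserD_succ t :
  D t.+1 = c%:M - (c * c) *: invmx (D t + c%:M) + x t.+1 *m (x t.+1)^T.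
Proof.
rewrite /= invmx_invD_scalar ?gt_eqF //.
  exact/posdef_unit/laserD_posdef.
exact/posdef_unit/laserDc_posdef.
Qed.

Lemma laserE_succ t :
  E t.+1 = c *: (invmx (D t + c%:M) *m E t) + y t.+1 *: x t.+1.
Proof.
by rewrite /= invmx_1D_scale -?scalemxAl ?gt_eqF //; apply/posdef_unit/laserDc_posdef.
Qed.

Fixpoint laser_const t : R :=
  match t with
  | 0 => 0
  | s.+1 => laser_const s - vdot (E s) (invmx (D s + c%:M) *m E s) + y s.+1 ^+ 2
  end.

Definition laser_cost t u := vdot u (D t *m u) - 2 * vdot (E t) u + laser_const t.

Definition laser_min_cost t := laser_const t - vdot (E t) (invmx (D t) *m E t).

(* The closed form of min_u' laser_cost t u' + c * sqnorm (u' - u). *)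
Definition laser_drift_cost t u := laser_const t + c * sqnorm u
  - vdot (E t + c *: u) (invmx (D t + c%:M) *m (E t + c *: u)).

Lemma laser_cost_min_cost t u :
  laser_cost t u = laser_min_cost t
    + vdot (u - invmx (D t) *m E t) (D t *m (u - invmx (D t) *m E t)).
Proof.
have := vdot_complete_square u (E t) (laserD_posdef t).
by rewrite /laser_cost /laser_min_cost => ->; ring.
Qed.

Lemma laser_min_cost_le t u : laser_min_cost t <= laser_cost t u.
Proof. by rewrite laser_cost_min_cost lerDl; apply/posdef_form_ge0/laserD_posdef. Qed.

Lemma laser_cost_drift t u u' :
  laser_cost t u' + c * sqnorm (u' - u) = laser_drift_cost t u
    + vdot (u' - invmx (D t + c%:M) *m (E t + c *: u))
        ((D t + c%:M) *m (u' - invmx (D t + c%:M) *m (E t + c *: u))).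
Proof.
have := vdot_complete_square u' (E t + c *: u) (laserDc_posdef t).
rewrite /laser_cost /laser_drift_cost /sqnorm -!/(vdot _ _).
set q := vdot (u' - invmx _ *m _) _; set r := vdot (E t + c *: u) (invmx _ *m _).
clearbody q r.
rewrite mulmxDl (vdotDr u' (D t *m u')) vdot_scalar_mx vdotDl vdotZl vdotBl !vdotBr.
rewrite (vdotC (E t)) (vdotC u) => sq.
have -> : q = (- r + q) + r by ring.
by rewrite -sq; ring.
Qed.

Lemma laser_drift_cost_le t u u' :
  laser_drift_cost t u <= laser_cost t u' + c * sqnorm (u' - u).
Proof. by rewrite laser_cost_drift lerDl; apply/posdef_form_ge0/laserDc_posdef. Qed.

Lemma laser_min_cost_le_drift t u : laser_min_cost t <= laser_drift_cost t u.
Proof.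
set u' := invmx (D t + c%:M) *m (E t + c *: u).
have := laser_cost_drift t u u'; rewrite subrr vdot0l addr0 => <-.
apply: le_trans (laser_min_cost_le t u') _.
by rewrite lerDl mulr_ge0 ?sqnorm_ge0 ?ltW.
Qed.

Lemma laser_cost_succ t u :
  laser_cost t.+1 u = laser_drift_cost t u + (vdot (x t.+1) u - y t.+1) ^+ 2.
Proof.
have Mi_sym : (invmx (D t + c%:M))^T = invmx (D t + c%:M).
  by case: (posdef_inv (laserDc_posdef t)).
rewrite /laser_cost /laser_drift_cost laserD_succ laserE_succ /= /sqnorm -!/(vdot _ _).
rewrite !(mulmxDl, mulmxBl, mulmxDr, vdot_outer, vdot_scalar_mx, vdotDl, vdotDr,
  vdotBr, vdotZl, vdotZr, mulNmx, vdotNr) -scalemxAl -scalemxAr !vdotZr.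
rewrite (vdotC (_ *m E t) u) (vdot_mulmxr u _ (E t)) Mi_sym (vdotC _ (E t)).
by rewrite (vdotC u (x t.+1)); ring.
Qed.

Lemma laser_min_cost0 : laser_min_cost 0 = 0.
Proof. by rewrite /laser_min_cost /= vdot0l subr0. Qed.

Lemma laser_drift_cost0 u : laser_drift_cost 0 u = b * sqnorm u.
Proof.
have cb_neq0 : c - b != 0 by rewrite subr_eq0 gt_eqF.
have c_neq0 : c != 0 by rewrite gt_eqF.
rewrite /laser_drift_cost /= add0r -raddfD /=.
have -> : b * c / (c - b) + c = c ^+ 2 / (c - b) by field.
rewrite invmx_scalar vdot_scalar_mx.
by rewrite /sqnorm -/(vdot _ _) add0r vdotZl vdotZr; field; apply/andP.
Qed.

Lemma laser_pred_vdot t :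
  laser_pred b c x y t.+1
  = vdot (x t.+1) (invmx (D t.+1) *m (invmx (1%:M + c^-1 *: D t) *m E t)).
Proof. by rewrite /laser_pred /vdot !mulmxA. Qed.

Lemma laser_loss_le t :
  (y t.+1 - laser_pred b c x y t.+1) ^+ 2 <= laser_min_cost t.+1 - laser_min_cost t
    + y t.+1 ^+ 2 * vdot (x t.+1) (invmx (D t.+1) *m x t.+1).
Proof.
have D_unit := posdef_unit (laserD_posdef t.+1).
set w := invmx (D t.+1) *m (invmx (1%:M + c^-1 *: D t) *m E t).
(* w differs from the minimiser D_{t+1}^-1 e_{t+1} by -y_{t+1} D_{t+1}^-1 x_{t+1}. *)
have cost_w : laser_cost t.+1 w = laser_min_cost t.+1
    + y t.+1 ^+ 2 * vdot (x t.+1) (invmx (D t.+1) *m x t.+1).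
  rewrite laser_cost_min_cost [E t.+1]/= mulmxDr -scalemxAr -/w opprD addNKr.
  rewrite mulmxN -scalemxAr mulKVmx // vdotNl vdotNr vdotZl vdotZr opprK.
  by rewrite (vdotC _ (x t.+1)) expr2 mulrA.
have := laser_cost_succ t w; rewrite cost_w laser_pred_vdot -/w.
have := laser_min_cost_le_drift t w.
by rewrite -(sqrrN (_ - _)) opprB; lra.
Qed.

Lemma laser_loss_sum N :
  \sum_(1 <= t < N.+1) (y t - laser_pred b c x y t) ^+ 2
  <= laser_min_cost N
     + \sum_(1 <= t < N.+1) y t ^+ 2 * vdot (x t) (invmx (D t) *m x t).
Proof.
elim: N => [|N IH]; first by rewrite !big_geq // laser_min_cost0 addr0.
by have := laser_loss_le N; rewrite !(big_nat_recr N.+1) //=; lra.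
Qed.

Lemma laser_cost_le_comparator (u : nat -> 'cV[R]_d) N :
  laser_cost N.+1 (u N.+1)
  <= b * sqnorm (u 1%N) + c * \sum_(1 <= t < N.+1) sqnorm (u t - u t.+1)
     + \sum_(1 <= t < N.+2) (vdot (x t) (u t) - y t) ^+ 2.
Proof.
elim: N => [|N IH].
  by rewrite laser_cost_succ laser_drift_cost0 big_geq // big_nat1 mulr0 addr0.
rewrite laser_cost_succ (big_nat_recr N.+1) // (big_nat_recr N.+2) //= mulrDr.
by have := laser_drift_cost_le N.+1 (u N.+2) (u N.+1); lra.
Qed.

Lemma laser_leverage_ge0 t : 0 <= vdot (x t) (invmx (D t) *m x t).
Proof. exact/posdef_form_ge0/posdef_inv/laserD_posdef. Qed.

End Laser.

Theorem theorem4 (R : realFieldType) (d T : nat) (b c Y : R)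
  (x : nat -> 'cV[R]_d) (y : nat -> R) :
  (1 <= d)%N -> (1 <= T)%N -> 0 < b -> b < c ->
  (forall t, (1 <= t <= T)%N -> `|y t| <= Y) ->
  forall u : nat -> 'cV[R]_d,
    \sum_(1 <= t < T.+1) (y t - laser_pred b c x y t) ^+ 2
    <= b * sqnorm (u 1%N)
       + c * \sum_(1 <= t < T) sqnorm (u t - u t.+1)
       + \sum_(1 <= t < T.+1) (vdot (x t) (u t) - y t) ^+ 2
       + Y ^+ 2 * \sum_(1 <= t < T.+1) vdot (x t) (invmx (laserD b c x t) *m x t).
Proof.
move=> _; case: T => [//|T] _ b_gt0 b_lt_c y_le u.
have loss := laser_loss_sum x y b_gt0 b_lt_c T.+1.
have min_le := laser_min_cost_le x y b_gt0 b_lt_c T.+1 (u T.+1).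
have comparator := laser_cost_le_comparator x y b_gt0 b_lt_c u T.
have labels : \sum_(1 <= t < T.+2) y t ^+ 2 * vdot (x t) (invmx (laserD b c x t) *m x t)
    <= Y ^+ 2 * \sum_(1 <= t < T.+2) vdot (x t) (invmx (laserD b c x t) *m x t).
  rewrite mulr_sumr; apply: ler_sum_nat => t t_range.
  rewrite ler_wpM2r ?laser_leverage_ge0 //.
  by have := y_le t t_range; rewrite ler_norml => /andP[]; nra.
lra.
Qed.
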